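(* Let $k\in\mathbb{N}$ and let $M_\psi$ be a bounded multiplication operator on $\mathcal{L}^{(k)}$ or on $\mathcal{L}^{(k)}_0$. Then $M_\psi$ is bounded below if and only if $\inf_{v\in T}|\psi(v)|>0$.
   Context: $T$ is a tree (locally finite, connected, simply connected graph, identified with its vertex set) without terminal vertices, rooted at $o$. $|v|$ is the distance from $o$ to $v$; for $v\ne o$, $v^-$ is the parent of $v$. $T^*=T\setminus\{o\}$, $Df(v)=|f(v)-f(v^-)|$. For $x\ge1$: $\ell_0(x)=1$, $\ell_1(x)=1+\ln x$, $\ell_j(x)=1+\ln\ell_{j-1}(x)$ for $j\ge2$. $\mathcal{L}^{(k)}$ is the space of $f:T\to\mathbb{C}$ with $\sup_{v\in T^*}|v|\prod_{j=0}^{k-1}\ell_j(|v|)Df(v)<\infty$, normed by $\|f\|_k=|f(o)|+\sup_{v\in T^*}|v|\prod_{j=0}^{k-1}\ell_j(|v|)Df(v)$; $\mathcal{L}^{(k)}_0$ is its subspace of $f$ with $|v|\prod_{j=0}^{k-1}\ell_j(|v|)Df(v)\to0$ as $|v|\to\infty$. $M_\psi f=\psi f$. An operator $S$ on a Banach space $X$ is bounded below if there is $c>0$ with $\|Sx\|\ge c\|x\|$ for all $x\in X$. *)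

From mathcomp Require Import all_boot all_order all_algebra.
From mathcomp Require Import all_classical all_reals all_analysis.
From mathcomp.real_closed Require Import complex.
Set Implicit Arguments. Unset Strict Implicit. Unset Printing Implicit Defensive.
Import Order.TTheory GRing.Theory Num.Theory.
Local Open Scope classical_set_scope.
Local Open Scope ring_scope.

(* A rooted tree, given by its vertex set [vert], root [root], parent map
   [par] (v^- for v <> root) and depth [depth] (= |v|, distance to the root).
   The edges of the underlying graph are the pairs {v, par v}, v <> root. *)
Record rtree := RTree {
  vert :> Type;
  root : vert;
  par : vert -> vert;
  depth : vert -> nat;
  depth_root : depth root = 0%N;
  depth_par : forall v, v <> root -> (depth (par v)).+1 = depth v;
  depth0 : forall v, depth v = 0%N -> v = root;
  locfin : forall v : vert,
    finite_set [set w | (w <> root /\ par w = v) \/ (v <> root /\ w = par v)];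
  (* no terminal vertices: no vertex has exactly one neighbour *)
  noterm : forall v : vert,
    ~ exists w, [set u | (u <> root /\ par u = v) \/ (v <> root /\ u = par v)]
                = [set w]
}.

Section Spaces.
Variables (R : realType) (T : rtree).

Definition Tstar : set T := [set v | v <> root T].

Fixpoint ell (j : nat) (x : R) : R :=
  match j with
  | 0%N => 1
  | 1%N => 1 + ln x
  | j'.+1 => 1 + ln (ell j' x)
  end.

Definition weight (k : nat) (v : T) : R :=
  (depth v)%:R * \prod_(j < k) ell j (depth v)%:R.

Definition Df (f : T -> R[i]) (v : T) : R := Normc.normc (f v - f (par v)).

Definition wDf (k : nat) (f : T -> R[i]) : set R :=
  [set weight k v * Df f v | v in Tstar].

Definition inL (k : nat) (f : T -> R[i]) : Prop := has_ubound (wDf k f).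

Definition inL0 (k : nat) (f : T -> R[i]) : Prop :=
  inL k f /\
  forall e : R, 0 < e -> exists N : nat, forall v, v \in Tstar ->
    (N <= depth v)%N -> weight k v * Df f v <= e.

Definition normk (k : nat) (f : T -> R[i]) : R :=
  Normc.normc (f (root T)) + sup (wDf k f).

Inductive lspace := Lk | Lk0.

Definition inspace (X : lspace) (k : nat) (f : T -> R[i]) : Prop :=
  match X with Lk => inL k f | Lk0 => inL0 k f end.

Definition Mult (psi f : T -> R[i]) : T -> R[i] := fun v => psi v * f v.

Definition bounded_mult (X : lspace) (k : nat) (psi : T -> R[i]) : Prop :=
  (forall f, inspace X k f -> inspace X k (Mult psi f)) /\
  exists C : R, forall f, inspace X k f ->
    normk k (Mult psi f) <= C * normk k f.

Definition bounded_below (X : lspace) (k : nat) (psi : T -> R[i]) : Prop :=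
  exists c : R, 0 < c /\ forall f, inspace X k f ->
    c * normk k f <= normk k (Mult psi f).

End Spaces.

From Pilot Require Import Defs.
From mathcomp Require Import all_boot all_order all_algebra.
From mathcomp Require Import all_classical all_reals all_analysis.
From mathcomp.real_closed Require Import complex.
From mathcomp Require Import ring.
Set Implicit Arguments. Unset Strict Implicit. Unset Printing Implicit Defensive.
Import Order.TTheory GRing.Theory Num.Theory.
Local Open Scope classical_set_scope.
Local Open Scope ring_scope.

(* A lower bound c ||f|| <= ||psi f|| tested on the indicator of a vertex v
   gives c <= |psi(v)|.  Conversely, let m = inf |psi| > 0 and let C bound
   M_psi.  Applied to a function frozen below depth |v^-|, so that at v only
   psi jumps, the bound on M_psi yields
     |v| prod_j l_j(|v|) |g(v^-)| |psi(v) - psi(v^-)| <= C ||g||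
   for every g in the space.  Writing
     psi(v) (f(v) - f(v^-)) = (psi f)(v) - (psi f)(v^-) - f(v^-) (psi(v) - psi(v^-))
   and using that bound with g = psi f gives m^2 ||f|| <= (2m + C) ||psi f||. *)

Lemma normc_ge0 {R : rcfType} (x : R[i]) : 0 <= Normc.normc x.
Proof. by case: x => a b; exact: sqrtr_ge0. Qed.

Lemma normcB_mul_lb {R : rcfType} (a b x y : R[i]) (m : R) :
  0 <= m -> m <= Normc.normc a -> m <= Normc.normc b ->
  m ^+ 2 * Normc.normc (x - y) <=
    m * Normc.normc (a * x - b * y) + Normc.normc (b * y) * Normc.normc (a - b).
Proof.
move=> m0 ma mb.
have jump : Normc.normc a * Normc.normc (x - y) <=
    Normc.normc (a * x - b * y) + Normc.normc y * Normc.normc (a - b).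
  rewrite -!Normc.normcM.
  have -> : a * (x - y) = (a * x - b * y) - y * (a - b) by ring.
  by apply: le_trans (le_normcD _ _) _; rewrite normcN.
have by_lb : m * Normc.normc y <= Normc.normc (b * y).
  by rewrite Normc.normcM ler_wpM2r ?normc_ge0.
rewrite expr2 -mulrA (le_trans (ler_wpM2l m0 (ler_wpM2r (normc_ge0 _) ma))) //.
rewrite (le_trans (ler_wpM2l m0 jump)) // mulrDr lerD2l mulrA.
by rewrite ler_wpM2r ?normc_ge0.
Qed.

Lemma sup_ge0 (R : realType) (E : set R) : (forall x, E x -> 0 <= x) -> 0 <= sup E.
Proof.
move=> E_ge0; have [[x Ex]|/set0P/negP/negPn/eqP->] := pselect (E !=set0).
  have [E_ub|E_nub] := pselect (has_ubound E); last by rewrite sup_out // => -[].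
  exact: le_trans (E_ge0 x Ex) (ub_le_sup E_ub Ex).
by rewrite sup0.
Qed.

Lemma ge0_ge_sup (R : realType) (E : set R) (B : R) :
  0 <= B -> ubound E B -> sup E <= B.
Proof.
move=> B0 EB; have [E0|/set0P/negP/negPn/eqP->] := pselect (E !=set0).
  exact: ge_sup.
by rewrite sup0.
Qed.

Section Weight.
Variable R : realType.

Lemma ell_ge1 (j : nat) (x : R) : 1 <= x -> 1 <= ell j x.
Proof.
move=> x1; elim: j => [|j IH] //.
by case: j IH => [|j] IH /=; rewrite lerDl ln_ge0.
Qed.

Definition depth_weight (k n : nat) : R := n%:R * \prod_(j < k) ell j n%:R.

Lemma prod_ell_ge1 (k n : nat) : (0 < n)%N -> 1 <= \prod_(j < k) ell j n%:R :> R.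
Proof.
move=> n_gt0; apply: (big_ind (fun x => 1 <= x)) => // [x y|j _]; first exact: mulr_ege1.
by rewrite ell_ge1 // ler1n.
Qed.

Lemma depth_weight_ge0 (k n : nat) : 0 <= depth_weight k n.
Proof.
rewrite /depth_weight; case: (posnP n) => [->|n_gt0]; first by rewrite mul0r.
by rewrite mulr_ge0 // (le_trans ler01) ?prod_ell_ge1.
Qed.

End Weight.

Section Norm.
Variables (R : realType) (T : rtree).
Implicit Types (f g psi : T -> R[i]) (v w : T).

Lemma weightE (k : nat) v : weight R k v = depth_weight R k (depth v).
Proof. by []. Qed.

Lemma weight_ge0 (k : nat) v : 0 <= weight R k v.
Proof. exact: depth_weight_ge0. Qed.

Lemma weight_gt0 (k : nat) v : v <> Defs.root T -> 0 < weight R k v.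
Proof.
move=> vr; have v_gt0 : (0 < depth v)%N by rewrite lt0n; apply/eqP => /depth0.
by rewrite mulr_gt0 ?ltr0n // (lt_le_trans ltr01) ?prod_ell_ge1.
Qed.

Lemma par_neq v : v <> Defs.root T -> par v <> v.
Proof. by move=> /depth_par + pv; rewrite pv => /esym/n_Sn. Qed.

Lemma Df_ge0 f v : 0 <= Df f v.
Proof. exact: normc_ge0. Qed.

Lemma sup_wDf_ge0 (k : nat) f : 0 <= sup (wDf k f).
Proof.
by apply: sup_ge0 => _ [v _ <-]; rewrite mulr_ge0 ?weight_ge0 ?Df_ge0.
Qed.

Lemma normk_ge_root (k : nat) f : Normc.normc (f (Defs.root T)) <= normk k f.
Proof. by rewrite /normk lerDl sup_wDf_ge0. Qed.

Lemma normk_ge_sup (k : nat) f : sup (wDf k f) <= normk k f.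
Proof. by rewrite /normk lerDr normc_ge0. Qed.

Lemma normk_ge0 (k : nat) f : 0 <= normk k f.
Proof. exact: le_trans (sup_wDf_ge0 k f) (normk_ge_sup k f). Qed.

Lemma wDf_le_sup (k : nat) f v : inL k f -> v <> Defs.root T ->
  weight R k v * Df f v <= sup (wDf k f).
Proof. by move=> f_ub vr; apply: (ub_le_sup f_ub); exists v. Qed.

Lemma wDf_le_normk (k : nat) f v : inL k f -> v <> Defs.root T ->
  weight R k v * Df f v <= normk k f.
Proof. by move=> f_ub vr; rewrite (le_trans _ (normk_ge_sup k f)) ?wDf_le_sup. Qed.

Lemma normk_le (k : nat) f (a b : R) :
  Normc.normc (f (Defs.root T)) <= a -> 0 <= b ->
  (forall v, v <> Defs.root T -> weight R k v * Df f v <= b) -> normk k f <= a + b.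
Proof.
move=> fa b0 wDf_le; rewrite lerD // ge0_ge_sup // => _ [v vr <-].
exact: wDf_le.
Qed.

Lemma inspace_inL (X : lspace) (k : nat) f : inspace X k f -> inL k f.
Proof. by case: X => // -[]. Qed.

Lemma inspaceP (X : lspace) (k : nat) f : inL k f ->
  (forall e : R, 0 < e -> exists N : nat, forall v, v <> Defs.root T ->
    (N <= depth v)%N -> weight R k v * Df f v <= e) -> inspace X k f.
Proof.
move=> f_ub f_vanish; case: X => //; split=> // e e0.
have [N HN] := f_vanish e e0; exists N => v; rewrite inE; exact: HN.
Qed.

Lemma normk_scale_le (k : nat) (a : R[i]) f : inL k f ->
  normk k (fun w => a * f w) <= Normc.normc a * normk k f.
Proof.
move=> f_ub; rewrite /normk mulrDr Normc.normcM lerD2l.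
rewrite ge0_ge_sup ?mulr_ge0 ?normc_ge0 ?sup_wDf_ge0 //.
move=> _ [w wr <-]; rewrite /Df -mulrBr Normc.normcM mulrCA.
by rewrite ler_wpM2l ?normc_ge0 ?wDf_le_sup.
Qed.

End Norm.

Section Indicator.
Variables (R : realType) (T : rtree).

Definition delta (v : T) : T -> R[i] := fun w => if `[< w = v >] then 1 else 0.

Lemma Df_delta_le1 (v w : T) : Df (delta v) w <= 1.
Proof.
rewrite /Df /delta; case: ifP => _; case: ifP => _;
  by rewrite ?subrr ?subr0 ?sub0r ?normcN ?Normc.normc0 ?Normc.normc1.
Qed.

Lemma Df_delta_eq0 (v w : T) : w <> v -> par w <> v -> Df (delta v) w = 0.
Proof.
by move=> wv pwv; rewrite /Df /delta !asboolF // subrr Normc.normc0.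
Qed.

Lemma delta_inspace (X : lspace) (k : nat) (v : T) : inspace X k (delta v).
Proof.
have wDf_le (w : T) : weight R k w * Df (delta v) w <= weight R k w.
  by rewrite ler_piMr ?weight_ge0 ?Df_delta_le1.
apply: inspaceP.
  exists (depth_weight R k (depth v) + depth_weight R k (depth v).+1) => _ [w wr <-].
  have [->|wv] := pselect (w = v).
    by rewrite (le_trans (wDf_le v)) // lerDl depth_weight_ge0.
  have [pwv|pwv] := pselect (par w = v).
    rewrite (le_trans (wDf_le w)) // weightE -(depth_par wr) pwv.
    by rewrite lerDr depth_weight_ge0.
  by rewrite Df_delta_eq0 // mulr0 addr_ge0 ?depth_weight_ge0.
move=> e e0; exists (depth v).+2 => w wr dw.
rewrite Df_delta_eq0 ?mulr0 ?ltW // => [wv|pwv].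
  by move: dw; rewrite wv ltnNge leqnSn.
by move: dw; rewrite -(depth_par wr) pwv ltnn.
Qed.

Lemma normk_delta_gt0 (k : nat) (v : T) : 0 < normk k (delta v).
Proof.
have [->|vr] := pselect (v = Defs.root T).
  by rewrite (lt_le_trans _ (normk_ge_root k _)) // /delta asboolT // Normc.normc1.
apply: lt_le_trans (wDf_le_normk (inspace_inL (delta_inspace Lk k v)) vr).
rewrite mulr_gt0 ?weight_gt0 // /Df /delta.
rewrite asboolT // (asboolF (par_neq vr)).
by rewrite subr0 Normc.normc1.
Qed.

Lemma normk_Mult_delta_le (k : nat) (psi : T -> R[i]) (v : T) :
  normk k (Mult psi (delta v)) <= Normc.normc (psi v) * normk k (delta v).
Proof.
have -> : Mult psi (delta v) = fun w => psi v * delta v w.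
  by apply: funext => w; rewrite /Mult /delta; case: asboolP => [->|]; rewrite ?mulr0.
exact/normk_scale_le/inspace_inL/(delta_inspace Lk).
Qed.

End Indicator.

Lemma bounded_below_inf_gt0 (R : realType) (T : rtree) (X : lspace) (k : nat)
    (psi : T -> R[i]) :
  bounded_below X k psi -> 0 < inf [set Normc.normc (psi v) | v in [set: T]].
Proof.
move=> [c [c0 c_lb]]; apply: lt_le_trans c0 _; apply: lb_le_inf.
  by exists (Normc.normc (psi (Defs.root T))), (Defs.root T).
move=> _ [v _ <-].
have := le_trans (c_lb _ (delta_inspace _ X k v)) (normk_Mult_delta_le k psi v).
by rewrite ler_pM2r // normk_delta_gt0.
Qed.

Section Truncation.
Variables (R : realType) (T : rtree).
Implicit Types (g : T -> R[i]) (w : T).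

(* A vertex deeper than [n] takes the value of its ancestor at depth [n];
   for [depth w <= n] the truncated subtraction makes the iteration empty. *)
Definition truncate (n : nat) g : T -> R[i] :=
  fun w => g (iter (depth w - n) (@par T) w).

Lemma truncate_le (n : nat) g w : (depth w <= n)%N -> truncate n g w = g w.
Proof. by rewrite /truncate -subn_eq0 => /eqP ->. Qed.

Lemma truncate_par (n : nat) g w : w <> Defs.root T -> (n < depth w)%N ->
  truncate n g (par w) = truncate n g w.
Proof.
move=> wr nw; rewrite /truncate -[in RHS](depth_par wr) subSn ?iterSr //.
by rewrite -ltnS (depth_par wr).
Qed.

Lemma Df_truncate_le (n : nat) g w : w <> Defs.root T -> Df (truncate n g) w <= Df g w.
Proof.
move=> wr; have [wn|nw] := leqP (depth w) n.
  rewrite /Df !truncate_le // -ltnS (depth_par wr); exact: ltnW.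
by rewrite /Df truncate_par // subrr Normc.normc0 Df_ge0.
Qed.

Lemma wDf_truncate_le (k n : nat) g w : w <> Defs.root T ->
  weight R k w * Df (truncate n g) w <= weight R k w * Df g w.
Proof. by move=> wr; rewrite ler_wpM2l ?weight_ge0 ?Df_truncate_le. Qed.

Lemma truncate_inspace (X : lspace) (k n : nat) g :
  inspace X k g -> inspace X k (truncate n g).
Proof.
have inL_trunc : inL k g -> inL k (truncate n g).
  move=> [M g_ub]; exists M => _ [w wr <-].
  by rewrite (le_trans (wDf_truncate_le k n g wr)) //; apply: g_ub; exists w.
case: X => [|[g_ub g_vanish]]; first exact: inL_trunc.
split; first exact: inL_trunc.
move=> e e0; have [N HN] := g_vanish e e0; exists N => w wT dw.
by rewrite (le_trans _ (HN w wT dw)) // wDf_truncate_le //; move: wT; rewrite inE.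
Qed.

Lemma normk_truncate_le (k n : nat) g : inL k g -> normk k (truncate n g) <= normk k g.
Proof.
move=> g_ub; rewrite /normk truncate_le ?depth_root // lerD2l.
rewrite ge0_ge_sup ?sup_wDf_ge0 // => _ [w wr <-].
by rewrite (le_trans (wDf_truncate_le k n g wr)) ?wDf_le_sup.
Qed.

End Truncation.

Section BoundedMult.
Variables (R : realType) (T : rtree) (X : lspace) (k : nat) (psi : T -> R[i]) (C : R).
Hypothesis C_ge0 : 0 <= C.
Hypothesis Mult_inspace : forall f, inspace X k f -> inspace X k (Mult psi f).
Hypothesis normk_Mult_le :
  forall f, inspace X k f -> normk k (Mult psi f) <= C * normk k f.

Lemma weight_Dpsi_le (g : T -> R[i]) (v : T) : inspace X k g -> v <> Defs.root T ->
  weight R k v * (Normc.normc (g (par v)) * Df psi v) <= C * normk k g.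
Proof.
move=> g_in vr; set h := truncate (depth (par v)) g.
have h_in : inspace X k h by exact: truncate_inspace.
have pv_v : (depth (par v) < depth v)%N by rewrite -(depth_par vr).
have -> : Normc.normc (g (par v)) * Df psi v = Df (Mult psi h) v.
  rewrite /Df /Mult /h -(truncate_par _ vr pv_v) truncate_le //.
  by rewrite -mulrBl Normc.normcM mulrC.
rewrite (le_trans (wDf_le_normk (inspace_inL (Mult_inspace h_in)) vr)) //.
rewrite (le_trans (normk_Mult_le h_in)) // ler_wpM2l //.
exact: normk_truncate_le _ (inspace_inL g_in).
Qed.

Variable m : R.
Hypothesis m_gt0 : 0 < m.
Hypothesis psi_lb : forall v, m <= Normc.normc (psi v).

Lemma normk_le_Mult (f : T -> R[i]) : inspace X k f ->
  m ^+ 2 * normk k f <= (2 * m + C) * normk k (Mult psi f).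
Proof.
move=> f_in; set g := Mult psi f; set ng := normk k g.
have m_ge0 : 0 <= m := ltW m_gt0.
have g_in : inspace X k g by exact: Mult_inspace.
have m2_gt0 : 0 < m ^+ 2 by exact: exprn_gt0.
have wDf_le w : w <> Defs.root T -> m ^+ 2 * (weight R k w * Df f w) <= (m + C) * ng.
  move=> wr; have jump_lb :
      m ^+ 2 * Df f w <= m * Df g w + Normc.normc (g (par w)) * Df psi w.
    exact: normcB_mul_lb m_ge0 (psi_lb w) (psi_lb (par w)).
  rewrite mulrCA (le_trans (ler_wpM2l (weight_ge0 _ k w) jump_lb)) // mulrDr mulrDl.
  rewrite lerD ?weight_Dpsi_le // mulrCA ler_wpM2l //.
  exact: wDf_le_normk (inspace_inL g_in) wr.
have root_le : m * Normc.normc (f (Defs.root T)) <= ng.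
  rewrite (le_trans _ (normk_ge_root k g)) // /g /Mult Normc.normcM.
  by rewrite ler_wpM2r ?normc_ge0.
have normk_f_le : normk k f <= ng / m + (m + C) * ng / m ^+ 2.
  apply: normk_le => [||w wr]; first by rewrite ler_pdivlMr // mulrC.
  - exact: divr_ge0 (mulr_ge0 (addr_ge0 m_ge0 C_ge0) (normk_ge0 k g)) (exprn_ge0 2 m_ge0).
  - by rewrite ler_pdivlMr // mulrC wDf_le.
have m_neq0 : m != 0 by rewrite gt_eqF.
have -> : (2 * m + C) * ng = m ^+ 2 * (ng / m + (m + C) * ng / m ^+ 2) by field.
by rewrite ler_wpM2l ?exprn_ge0.
Qed.

End BoundedMult.

Lemma inf_gt0_bounded_below (R : realType) (T : rtree) (X : lspace) (k : nat)
    (psi : T -> R[i]) :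
  bounded_mult X k psi ->
  0 < inf [set Normc.normc (psi v) | v in [set: T]] -> bounded_below X k psi.
Proof.
move=> [Mult_in [C0 normk_Mult_le]]; set m := inf _ => m_gt0.
have psi_lb v : m <= Normc.normc (psi v).
  by apply: ge_inf; [exists 0 => _ [w _ <-]; exact: normc_ge0|exists v].
pose C := Num.max C0 0.
have C_ge0 : 0 <= C by rewrite le_max lexx orbT.
have normk_Mult_leC f : inspace X k f -> normk k (Mult psi f) <= C * normk k f.
  move=> f_in; rewrite (le_trans (normk_Mult_le f f_in)) // ler_wpM2r ?normk_ge0 //.
  by rewrite le_max lexx.
have den_gt0 : 0 < 2 * m + C by rewrite ltr_wpDr ?mulr_gt0.
exists (m ^+ 2 / (2 * m + C)); split; first by rewrite divr_gt0 ?exprn_gt0.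
move=> f f_in; rewrite mulrAC ler_pdivrMr // [leRHS]mulrC.
exact: (normk_le_Mult C_ge0 Mult_in normk_Mult_leC m_gt0 psi_lb f_in).
Qed.

Theorem theorem4p4 (R : realType) (T : rtree) (k : nat) (X : lspace)
  (psi : T -> R[i]) :
  bounded_mult X k psi ->
  (bounded_below X k psi <->
   0 < inf [set Normc.normc (psi v) | v in [set: T]]).
Proof.
move=> psi_bdd; split; first exact: bounded_below_inf_gt0.
exact: inf_gt0_bounded_below.
Qed.
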